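(* Let $X=\ell_p$ for some $1\le p<\infty$, or $X=c_0$, considered as a Banach algebra under coordinatewise multiplication. Let $x_0\in X$, $m\in\mathbb N$, and $\lambda\in\mathbb C$ with $|\lambda|>1$. If $x_0^m$ is frequently hypercyclic for $\lambda B$, then so is $\sum_{\nu=m}^N\alpha_\nu x_0^\nu$ for any $N\ge m$ and any $\alpha_m,\ldots,\alpha_N\in\mathbb C$ with $\alpha_m\ne0$.
   Context: $\lambda B(x(1),x(2),x(3),\ldots)=(\lambda x(2),\lambda x(3),\ldots)$; powers are coordinatewise. A vector $x$ is frequently hypercyclic for $T$ if for every non-empty open $U\subset X$ the set $\{n\in\mathbb N_0:T^nx\in U\}$ has positive lower density, where the lower density of $A\subset\mathbb N_0$ is $\liminf_{N\to\infty}\frac{\mathrm{card}(A\cap[0,N])}{N+1}$. *)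

From Stdlib Require Import Reals ClassicalEpsilon.
From Coquelicot Require Import Coquelicot.
Open Scope R_scope.

(* Complex sequences, indexed from 0 (x 0 plays the role of x(1)). *)
Definition seqC := nat -> C.

Definition rpow (t p : R) : R :=
  if Req_EM_T t 0 then 0 else Rpower t p.

Inductive space := Lp (p : R) | C0.

Definition inX (X : space) (x : seqC) : Prop :=
  match X with
  | Lp p => ex_series (fun n => rpow (Cmod (x n)) p)
  | C0 => is_lim_seq (fun n => Cmod (x n)) 0
  end.

Definition normX (X : space) (x : seqC) : R :=
  match X with
  | Lp p => Rpower (Series (fun n => rpow (Cmod (x n)) p)) (/ p)
  | C0 => real (Sup_seq (fun n => Finite (Cmod (x n))))
  end.

Definition openX (X : space) (U : seqC -> Prop) : Prop :=
  (forall x, U x -> inX X x) /\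
  forall y, U y -> exists eps, 0 < eps /\
    forall z, inX X z -> normX X (fun n => Cminus (z n) (y n)) < eps -> U z.

Fixpoint count_upto (A : nat -> Prop) (N : nat) : R :=
  (match N with O => 0 | S N' => count_upto A N' end) +
  (if excluded_middle_informative (A N) then 1 else 0).

Definition lower_density (A : nat -> Prop) : Rbar :=
  LimInf_seq (fun N => count_upto A N / INR (S N)).

Definition freq_hypercyclic (X : space) (T : seqC -> seqC) (x : seqC) : Prop :=
  inX X x /\
  forall U, openX X U -> (exists u, U u) ->
    Rbar_lt 0 (lower_density (fun n => U (Nat.iter n T x))).

Definition lamB (lam : C) (x : seqC) : seqC := fun n => Cmult lam (x (S n)).

Definition cpow (x : seqC) (k : nat) : seqC := fun n => pow_n (x n) k.

From Stdlib Require Import Reals Lra Lia FunctionalExtensionality ClassicalEpsilon.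
From Coquelicot Require Import Coquelicot.
Open Scope R_scope.

(* The iterates of [lamB lam] act by ((lam B)^n y)_k = lam^n y_(n+k). Put
   P(t) = sum_(nu=m)^N alpha_nu t^nu. Coordinatewise, (lam B)^n P(x0) differs from
   alpha_m (lam B)^n x0^m by lam^n (P(t) - alpha_m t^m) at t = x0_(n+k). For any eta > 0
   this is at most eta |lam^n t^m| as soon as |t| is small, hence for every k once n exceeds
   some n0, because the coordinates of x0 tend to 0. For a nonempty open U there is a
   nonempty open V such that every z with |z_k - alpha_m w_k| <= eta |w_k| for all k, for
   some w in V, lies in U. So the return times of P(x0) to U contain the return times of
   x0^m to V beyond n0, a set of positive lower density. *)

(** * Real powers, series and suprema *)

Lemma rpow_0_l p : rpow 0 p = 0.
Proof. unfold rpow; destruct (Req_EM_T 0 0); lra. Qed.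

Lemma rpow_Rpower t p : 0 < t -> rpow t p = Rpower t p.
Proof. intros; unfold rpow; destruct (Req_EM_T t 0); [lra|auto]. Qed.

Lemma rpow_ge0 t p : 0 <= rpow t p.
Proof.
  unfold rpow; destruct (Req_EM_T t 0); [lra|]. left; apply exp_pos.
Qed.

Lemma rpow_gt0 t p : 0 < t -> 0 < rpow t p.
Proof. intros; rewrite rpow_Rpower by auto; apply exp_pos. Qed.

Lemma rpow_le_compat s t p : 0 < p -> 0 <= s <= t -> rpow s p <= rpow t p.
Proof.
  intros Hp [Hs Hst]. destruct (Req_dec s 0) as [->|Hs0].
  - rewrite rpow_0_l; apply rpow_ge0.
  - rewrite !rpow_Rpower by lra. apply Rle_Rpower_l; lra.
Qed.

Lemma rpow_lt_reg s t p : 0 < p -> 0 <= t -> rpow s p < rpow t p -> s < t.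
Proof.
  intros Hp Ht H. destruct (Rlt_or_le s t) as [|Hts]; auto.
  assert (rpow t p <= rpow s p) by (apply rpow_le_compat; lra). lra.
Qed.

Lemma rpow_mult_distr a b p : 0 <= a -> 0 <= b -> rpow (a * b) p = rpow a p * rpow b p.
Proof.
  intros Ha Hb. destruct (Req_dec a 0) as [->|Ha0].
  { rewrite Rmult_0_l, !rpow_0_l; ring. }
  destruct (Req_dec b 0) as [->|Hb0].
  { rewrite Rmult_0_r, !rpow_0_l; ring. }
  rewrite !rpow_Rpower by nra. rewrite Rpower_mult_distr; lra.
Qed.

Lemma rpow_le_self t p : 1 <= p -> 0 <= t <= 1 -> rpow t p <= t.
Proof.
  intros Hp [Ht0 Ht1]. destruct (Req_dec t 0) as [->|Ht].
  { rewrite rpow_0_l; lra. }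
  rewrite rpow_Rpower by lra. unfold Rpower.
  assert (ln t <= 0) by (rewrite <- ln_1; apply ln_le; lra).
  rewrite <- (exp_ln t) at 2 by lra.
  destruct (Req_dec (p * ln t) (ln t)) as [E|E]; [rewrite E; lra|].
  left; apply exp_increasing; nra.
Qed.

Lemma rpow_add_le s t p : 0 < p -> 0 <= s -> 0 <= t ->
  rpow (s + t) p <= rpow 2 p * (rpow s p + rpow t p).
Proof.
  intros Hp Hs Ht. pose proof (rpow_ge0 s p). pose proof (rpow_ge0 t p).
  apply Rle_trans with (rpow (2 * Rmax s t) p).
  - apply rpow_le_compat; [lra|split; [lra|apply Rmax_case_strong; lra]].
  - rewrite rpow_mult_distr by (try lra; apply Rmax_case; auto).
    apply Rmult_le_compat_l; [apply rpow_ge0|apply Rmax_case; lra].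
Qed.

Lemma Rpower_inv_lt_rpow s e p : 0 < p -> 0 < s -> 0 < e -> s < rpow e p -> Rpower s (/ p) < e.
Proof.
  intros Hp Hs He H. rewrite rpow_Rpower in H by lra.
  replace e with (Rpower (Rpower e p) (/ p)).
  - apply Rlt_Rpower_l; [apply Rinv_0_lt_compat|]; lra.
  - rewrite Rpower_mult, Rinv_r, Rpower_1; lra.
Qed.

Lemma Rpower_lt_reg c a b : 0 < c -> 0 < b -> Rpower a c < Rpower b c -> a < b.
Proof.
  intros Hc Hb H. destruct (Rlt_or_le a b) as [|Hba]; auto.
  assert (Rpower b c <= Rpower a c) by (apply Rle_Rpower_l; lra). lra.
Qed.

Lemma Series_ge0 a : (forall n, 0 <= a n) -> ex_series a -> 0 <= Series a.
Proof.
  intros Ha Ea. replace 0 with (Series (fun _ => 0 * 0)).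
  - apply Series_le; auto. intros n; specialize (Ha n); lra.
  - rewrite (Series_scal_l 0 (fun _ => 0)); ring.
Qed.

Lemma Series_ge_term a k : (forall n, 0 <= a n) -> ex_series a -> a k <= Series a.
Proof.
  revert a; induction k as [|k IHk]; intros a Ha Ea;
    rewrite Series_incr_1 by auto;
    assert (Ea1 : ex_series (fun n => a (S n))) by (apply (proj1 (ex_series_incr_1 a)); auto).
  - pose proof (Series_ge0 _ (fun n => Ha (S n)) Ea1). lra.
  - pose proof (IHk (fun n => a (S n)) (fun n => Ha (S n)) Ea1). pose proof (Ha 0%nat). lra.
Qed.

Lemma is_lim_seq_0_eventually_lt (u : nat -> R) r :
  is_lim_seq u 0 -> 0 < r -> exists n0, forall j, (n0 <= j)%nat -> u j < r.
Proof.
  intros Hu Hr. apply is_lim_seq_spec in Hu. destruct (Hu (mkposreal r Hr)) as [n0 Hn0].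
  exists n0; intros j Hj. specialize (Hn0 j Hj). simpl in Hn0.
  rewrite Rminus_0_r in Hn0. apply Rabs_def2 in Hn0. lra.
Qed.

Lemma eventually_bounded_bounded (u : nat -> R) n0 B :
  (forall j, (n0 <= j)%nat -> u j <= B) -> exists D, forall j, u j <= D.
Proof.
  revert B; induction n0 as [|n0 IH]; intros B H.
  - exists B; intros; apply H; lia.
  - apply (IH (Rmax B (u n0))). intros j Hj. destruct (Nat.eq_dec j n0) as [->|Hne].
    + apply Rmax_r.
    + eapply Rle_trans; [apply H; lia|apply Rmax_l].
Qed.

Lemma normX_C0_lub (z : seqC) : (exists M, forall k, Cmod (z k) <= M) ->
  (forall k, Cmod (z k) <= normX C0 z) /\
  (forall M, (forall k, Cmod (z k) <= M) -> normX C0 z <= M).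
Proof.
  intros [M HM]. unfold normX. generalize (Sup_seq_correct (fun n => Finite (Cmod (z n)))).
  destruct (Sup_seq (fun n => Finite (Cmod (z n)))) as [l| |]; simpl; intros H.
  - split.
    + intros k. apply Rnot_lt_le; intros Hk.
      destruct (H (mkposreal (Cmod (z k) - l) ltac:(lra))) as [H1 _].
      specialize (H1 k). simpl in H1. lra.
    + intros M' HM'. apply Rnot_lt_le; intros Hk.
      destruct (H (mkposreal (l - M') ltac:(lra))) as [_ [n Hn]].
      simpl in Hn. specialize (HM' n). lra.
  - destruct (H M) as [n Hn]. simpl in Hn. specialize (HM n). lra.
  - specialize (H 0 0%nat). simpl in H. pose proof (Cmod_ge_0 (z 0%nat)). lra.
Qed.

(** * A quasi-norm on l_p and c_0 *)

Definition admissible (X : space) : Prop := (exists p, X = Lp p /\ 1 <= p) \/ X = C0.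

(* We measure distances with the quasi-norm [sum |z_n|^p] (resp. [sup |z_n|]) rather than
   [normX]: it defines the same open sets, and its quasi-triangle inequality with constant
   [2^p] avoids Minkowski's inequality. *)
Definition qnorm (X : space) (z : seqC) : R :=
  match X with Lp p => Series (fun n => rpow (Cmod (z n)) p) | C0 => normX C0 z end.

Definition qnorm_const (X : space) : R := match X with Lp p => rpow 2 p | C0 => 1 end.

Definition qnorm_scale (X : space) (c : R) : R := match X with Lp p => rpow c p | C0 => c end.

Definition qinterior (X : space) (P : seqC -> Prop) (w : seqC) : Prop :=
  inX X w /\ exists rho, 0 < rho /\
    forall w', inX X w' -> qnorm X (fun n => Cminus (w' n) (w n)) < rho -> P w'.

Section QuasiNorm.

Variable X : space.
Hypothesis HX : admissible X.

Lemma qnorm_const_pos : 0 < qnorm_const X.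
Proof. destruct HX as [[p [-> Hp]]| ->]; simpl; [apply rpow_gt0|]; lra. Qed.

Lemma qnorm_scale_ge0 c : 0 <= c -> 0 <= qnorm_scale X c.
Proof. destruct HX as [[p [-> Hp]]| ->]; simpl; auto using rpow_ge0. Qed.

Lemma qnorm_scale_le c : 0 <= c <= 1 -> qnorm_scale X c <= c.
Proof. destruct HX as [[p [-> Hp]]| ->]; simpl; intros; [apply rpow_le_self|]; lra. Qed.

Lemma inX_coord_small x : inX X x -> forall r, 0 < r ->
  exists n0, forall j, (n0 <= j)%nat -> Cmod (x j) < r.
Proof.
  intros Hx r Hr. destruct HX as [[p [-> Hp]]| ->]; simpl in Hx.
  - destruct (is_lim_seq_0_eventually_lt _ (rpow r p) (ex_series_lim_0 _ Hx) (rpow_gt0 r p Hr))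
      as [n0 Hn0].
    exists n0; intros j Hj. apply (rpow_lt_reg _ _ p); auto; lra.
  - apply is_lim_seq_0_eventually_lt; auto.
Qed.

Lemma inX_coord_bounded x : inX X x -> exists D, forall k, Cmod (x k) <= D.
Proof.
  intros Hx. destruct (inX_coord_small x Hx 1 Rlt_0_1) as [n0 Hn0].
  apply (eventually_bounded_bounded _ n0 1). intros; left; auto.
Qed.

Lemma qnorm_ge0 z : inX X z -> 0 <= qnorm X z.
Proof.
  intros Hz. destruct (inX_coord_bounded z Hz) as [D HD].
  destruct HX as [[p [-> Hp]]| ->]; simpl in *.
  - apply Series_ge0; auto using rpow_ge0.
  - destruct (normX_C0_lub z (ex_intro _ D HD)) as [Hub _].
    eapply Rle_trans; [apply Cmod_ge_0|apply (Hub 0%nat)].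
Qed.

Lemma qnorm_dominated a b c : inX X b -> 0 <= c -> (forall k, Cmod (a k) <= c * Cmod (b k)) ->
  inX X a /\ qnorm X a <= qnorm_scale X c * qnorm X b.
Proof.
  intros Hb Hc Hab. destruct (inX_coord_bounded b Hb) as [D HD].
  destruct HX as [[p [-> Hp]]| ->]; simpl in *.
  - assert (Hk : forall k, rpow (Cmod (a k)) p <= rpow c p * rpow (Cmod (b k)) p).
    { intros k. rewrite <- rpow_mult_distr by auto using Cmod_ge_0.
      apply rpow_le_compat; [lra|split; auto using Cmod_ge_0]. }
    assert (E : ex_series (fun k => rpow c p * rpow (Cmod (b k)) p))
      by exact (ex_series_scal_l (rpow c p) _ Hb).
    split.
    + apply (ex_series_le (V := R_CompleteNormedModule)) with (2 := E).
      intros k. rewrite Rabs_pos_eq by apply rpow_ge0. auto.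
    + rewrite <- Series_scal_l. apply Series_le; auto. intros; split; auto using rpow_ge0.
  - destruct (normX_C0_lub b (ex_intro _ D HD)) as [Hub _].
    assert (Ha : forall k, Cmod (a k) <= c * normX C0 b).
    { intros k. eapply Rle_trans; [apply Hab|]. apply Rmult_le_compat_l; auto. }
    split.
    + apply (is_lim_seq_le_le (fun _ => 0) _ (fun n => c * Cmod (b n))).
      * intros; split; auto using Cmod_ge_0.
      * apply is_lim_seq_const.
      * replace (Finite 0) with (Rbar_mult c 0) by (simpl; f_equal; ring).
        apply is_lim_seq_scal_l; auto.
    + apply (proj2 (normX_C0_lub a (ex_intro _ _ Ha))). auto.
Qed.

Lemma qnorm_scal_dominated c z y : inX X z -> (forall n, y n = Cmult c (z n)) ->
  inX X y /\ qnorm X y <= qnorm_scale X (Cmod c) * qnorm X z.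
Proof.
  intros Hz Hy. apply qnorm_dominated; auto using Cmod_ge_0.
  intros k. rewrite Hy, Cmod_mult. lra.
Qed.

Lemma qnorm_quasi_triangle a b c : inX X a -> inX X b -> (forall n, c n = Cplus (a n) (b n)) ->
  inX X c /\ qnorm X c <= qnorm_const X * (qnorm X a + qnorm X b).
Proof.
  intros Ha Hb Hc. apply functional_extensionality in Hc; subst c.
  destruct (inX_coord_bounded a Ha) as [Da HDa]. destruct (inX_coord_bounded b Hb) as [Db HDb].
  destruct HX as [[p [-> Hp]]| ->]; simpl in *.
  - assert (Hk : forall k, rpow (Cmod (a k + b k)) p
                   <= rpow 2 p * (rpow (Cmod (a k)) p + rpow (Cmod (b k)) p)).
    { intros k. apply Rle_trans with (rpow (Cmod (a k) + Cmod (b k)) p).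
      - apply rpow_le_compat; [lra|split; [apply Cmod_ge_0|apply Cmod_triangle]].
      - apply rpow_add_le; auto using Cmod_ge_0; lra. }
    assert (E : ex_series (fun k => rpow 2 p * (rpow (Cmod (a k)) p + rpow (Cmod (b k)) p))).
    { apply (ex_series_scal_l (rpow 2 p) (fun k => rpow (Cmod (a k)) p + rpow (Cmod (b k)) p)).
      exact (ex_series_plus _ _ Ha Hb). }
    split.
    + apply (ex_series_le (V := R_CompleteNormedModule)) with (2 := E).
      intros k. rewrite Rabs_pos_eq by apply rpow_ge0. auto.
    + rewrite <- Series_plus, <- Series_scal_l by auto.
      apply Series_le; auto. intros; split; auto using rpow_ge0.
  - destruct (normX_C0_lub a (ex_intro _ _ HDa)) as [Hua _].
    destruct (normX_C0_lub b (ex_intro _ _ HDb)) as [Hub _].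
    assert (Hs : forall k, Cmod (a k + b k) <= 1 * (normX C0 a + normX C0 b)).
    { intros k. eapply Rle_trans; [apply Cmod_triangle|]. specialize (Hua k); specialize (Hub k); lra. }
    split.
    + apply (is_lim_seq_le_le (fun _ => 0) _ (fun n => Cmod (a n) + Cmod (b n))).
      * intros; split; [apply Cmod_ge_0|apply Cmod_triangle].
      * apply is_lim_seq_const.
      * replace 0 with (0 + 0) by ring. apply is_lim_seq_plus'; auto.
    + apply (proj2 (normX_C0_lub _ (ex_intro _ _ Hs))). auto.
Qed.

Lemma inX_sub a b : inX X a -> inX X b -> inX X (fun n => Cminus (a n) (b n)).
Proof.
  intros Ha Hb.
  destruct (qnorm_scal_dominated (-1) b (fun n => Copp (b n)) Hb) as [Hb' _].
  { intros; ring. }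
  exact (proj1 (qnorm_quasi_triangle _ _ _ Ha Hb' (fun n => eq_refl))).
Qed.

(* In [Lp p] the value [normX z = (sum |z_n|^p)^(1/p)] is [1], not [0], at [z = 0],
   because Stdlib's [ln 0 = 0] makes [Rpower 0 _ = 1]; hence the case split on a zero sum. *)
Lemma openX_qball U y : openX X U -> U y ->
  exists e, 0 < e /\ forall z, inX X z -> qnorm X (fun n => Cminus (z n) (y n)) < e -> U z.
Proof.
  intros [HUX HU] Hy. destruct (HU y Hy) as [eps [Heps Hball]].
  assert (Hsub : forall z, inX X z -> inX X (fun n => Cminus (z n) (y n)))
    by (intros; apply inX_sub; auto).
  destruct HX as [[p [-> Hp]]| ->]; [|exists eps; auto].
  exists (rpow eps p); split; [apply rpow_gt0; auto|].
  intros z Hz Hzy. simpl in Hzy.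
  pose proof (Hsub z Hz) as Hd. simpl in Hd.
  pose proof (Series_ge0 _ (fun n => rpow_ge0 _ _) Hd) as Hs.
  set (s := Series _) in Hzy, Hs.
  destruct (Req_dec s 0) as [E|E].
  - replace z with y; auto. apply functional_extensionality; intros k.
    pose proof (Series_ge_term _ k (fun n => rpow_ge0 _ _) Hd) as Hk. fold s in Hk.
    destruct (Req_dec (Cmod (Cminus (z k) (y k))) 0) as [E0|E0].
    + apply Cmod_eq_0 in E0.
      replace (z k) with (Cplus (y k) (Cminus (z k) (y k))) by (unfold Cminus; ring).
      rewrite E0; ring.
    + pose proof (Cmod_ge_0 (Cminus (z k) (y k))).
      pose proof (rpow_gt0 (Cmod (Cminus (z k) (y k))) p ltac:(lra)). lra.
  - apply Hball; auto. simpl. apply Rpower_inv_lt_rpow; auto; fold s; lra.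

Qed.

Lemma openX_of_qballs V : (forall y, V y -> inX X y) ->
  (forall y, V y -> exists e, 0 < e /\
     forall z, inX X z -> qnorm X (fun n => Cminus (z n) (y n)) < e -> V z) ->
  openX X V.
Proof.
  intros HVX HV. split; auto. intros y Hy. destruct (HV y Hy) as [e [He Hball]].
  assert (Hsub : forall z, inX X z -> inX X (fun n => Cminus (z n) (y n)))
    by (intros; apply inX_sub; auto).
  destruct HX as [[p [-> Hp]]| ->]; [|exists e; auto].
  exists (Rpower e (/ p)); split; [apply exp_pos|].
  intros z Hz Hzy. apply Hball; auto. simpl in *.
  pose proof (Hsub z Hz) as Hd. simpl in Hd.
  pose proof (Series_ge0 _ (fun n => rpow_ge0 _ _) Hd).
  destruct (Req_dec (Series (fun n => rpow (Cmod (Cminus (z n) (y n))) p)) 0) as [E|E].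
  - lra.
  - apply (Rpower_lt_reg (/ p)); auto. apply Rinv_0_lt_compat; lra.
Qed.

Lemma openX_qinterior P : openX X (qinterior X P).
Proof.
  pose proof qnorm_const_pos as HK.
  apply openX_of_qballs; [intros y [Hy _]; auto|].
  intros y [Hy [rho [Hrho HP]]].
  exists (rho / (2 * qnorm_const X)); split; [apply Rdiv_lt_0_compat; lra|].
  intros z Hz Hzy. split; auto.
  exists (rho / (2 * qnorm_const X)); split; [apply Rdiv_lt_0_compat; lra|].
  intros w Hw Hwz. apply HP; auto.
  destruct (qnorm_quasi_triangle (fun n => Cminus (w n) (z n)) (fun n => Cminus (z n) (y n))
              (fun n => Cminus (w n) (y n)) (inX_sub w z Hw Hz) (inX_sub z y Hz Hy)) as [_ Htri].
  { intros n; unfold Cminus; ring. }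
  eapply Rle_lt_trans; [apply Htri|].
  replace rho with (qnorm_const X * (rho / (2 * qnorm_const X) + rho / (2 * qnorm_const X)))
    by (field; lra).
  apply Rmult_lt_compat_l; lra.
Qed.

Lemma qinterior_subset P w : qinterior X P w -> P w.
Proof.
  intros [Hw [rho [Hrho HP]]]. apply HP; auto.
  destruct (qnorm_dominated (fun n => Cminus (w n) (w n)) w 0 Hw (Rle_refl 0)) as [_ H0].
  { intros k. unfold Cminus. rewrite Cplus_opp_r, Cmod_0. lra. }
  replace (qnorm_scale X 0) with 0 in H0
    by (destruct HX as [[p [-> _]]| ->]; simpl; auto using eq_sym, rpow_0_l).
  lra.
Qed.

Lemma qinterior_scaled_ball_inv a u delta : a <> RtoC 0 -> inX X u -> 0 < delta ->
  qinterior X (fun w => qnorm X (fun n => Cminus (Cmult a (w n)) (u n)) < delta)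
    (fun n => Cmult (/ a) (u n)).
Proof.
  intros Ha Hu Hdelta.
  destruct (qnorm_scal_dominated (/ a) u _ Hu (fun n => eq_refl)) as [Hu' _].
  split; auto.
  pose proof (qnorm_scale_ge0 (Cmod a) (Cmod_ge_0 a)) as HPa.
  exists (delta / (qnorm_scale X (Cmod a) + 1)); split; [apply Rdiv_lt_0_compat; lra|].
  intros w Hw Hwu.
  pose proof (inX_sub _ _ Hw Hu') as Hd.
  destruct (qnorm_scal_dominated a _ (fun n => Cminus (Cmult a (w n)) (u n)) Hd) as [_ Hle].
  { intros n. unfold Cminus. field. auto. }
  pose proof (qnorm_ge0 _ Hd).
  eapply Rle_lt_trans; [apply Hle|].
  apply Rle_lt_trans with (qnorm_scale X (Cmod a) * (delta / (qnorm_scale X (Cmod a) + 1))).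
  - apply Rmult_le_compat_l; lra.
  - apply Rlt_le_trans with ((qnorm_scale X (Cmod a) + 1) * (delta / (qnorm_scale X (Cmod a) + 1))).
    + apply Rmult_lt_compat_r; [apply Rdiv_lt_0_compat|]; lra.
    + right; field; lra.
Qed.

Lemma qnorm_le_of_scaled_near a u w : a <> RtoC 0 -> inX X u -> inX X w ->
  qnorm X (fun n => Cminus (Cmult a (w n)) (u n)) <= 1 ->
  qnorm X w <= qnorm_const X * qnorm_scale X (Cmod (/ a)) * (1 + qnorm X u).
Proof.
  intros Ha Hu Hw Hnear.
  assert (Haw : inX X (fun n => Cminus (Cmult a (w n)) (u n))).
  { apply inX_sub; auto. exact (proj1 (qnorm_scal_dominated a w _ Hw (fun n => eq_refl))). }
  destruct (qnorm_scal_dominated (/ a) _ _ Haw (fun n => eq_refl)) as [I1 G1].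
  destruct (qnorm_scal_dominated (/ a) _ _ Hu (fun n => eq_refl)) as [I2 G2].
  destruct (qnorm_quasi_triangle _ _ w I1 I2) as [_ Htri].
  { intros n. unfold Cminus. field. auto. }
  pose proof (qnorm_const_pos).
  pose proof (qnorm_scale_ge0 _ (Cmod_ge_0 (/ a))).
  pose proof (qnorm_ge0 _ Haw).
  eapply Rle_trans; [apply Htri|]. rewrite Rmult_assoc.
  apply Rmult_le_compat_l; [lra|]. nra.
Qed.

Lemma qnorm_relative_perturbation a u w z eta : inX X u -> inX X w -> 0 <= eta <= 1 ->
  (forall k, Cmod (Cminus (z k) (Cmult a (w k))) <= eta * Cmod (w k)) ->
  inX X z /\ qnorm X (fun n => Cminus (z n) (u n))
    <= qnorm_const X * (qnorm X (fun n => Cminus (Cmult a (w n)) (u n)) + eta * qnorm X w).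
Proof.
  intros Hu Hw Heta Hzw.
  destruct (qnorm_scal_dominated a w _ Hw (fun n => eq_refl)) as [Haw _].
  destruct (qnorm_dominated (fun n => Cminus (z n) (Cmult a (w n))) w eta Hw (proj1 Heta) Hzw)
    as [Hzaw Gzaw].
  split.
  - apply (qnorm_quasi_triangle _ _ z Hzaw Haw). intros n. unfold Cminus. ring.
  - destruct (qnorm_quasi_triangle (fun n => Cminus (Cmult a (w n)) (u n))
                (fun n => Cminus (z n) (Cmult a (w n))) (fun n => Cminus (z n) (u n))
                (inX_sub _ _ Haw Hu) Hzaw) as [_ Htri].
    { intros n. unfold Cminus. ring. }
    eapply Rle_trans; [apply Htri|].
    pose proof qnorm_const_pos. pose proof (qnorm_scale_le eta Heta). pose proof (qnorm_ge0 w Hw).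
    apply Rmult_le_compat_l; [lra|]. apply Rplus_le_compat_l.
    eapply Rle_trans; [apply Gzaw|]. apply Rmult_le_compat_r; lra.
Qed.

(* [V] is the interior of the [1/a]-rescaled [qnorm]-ball around a point of [U]; elements of [V]
   have bounded [qnorm], which turns the relative coordinatewise bound into a small [qnorm]. *)
Lemma open_relative_perturbation U u a : openX X U -> U u -> a <> RtoC 0 ->
  exists V eta, openX X V /\ (exists y, V y) /\ 0 < eta /\
    forall w z, V w -> (forall k, Cmod (Cminus (z k) (Cmult a (w k))) <= eta * Cmod (w k)) -> U z.
Proof.
  intros HU Hu Ha.
  destruct (openX_qball U u HU Hu) as [e [He Hball]].
  assert (HuX : inX X u) by (apply (proj1 HU); auto).
  pose proof qnorm_const_pos as HK. set (K := qnorm_const X) in *.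
  set (M := K * qnorm_scale X (Cmod (/ a)) * (1 + qnorm X u)).
  assert (HM : 0 <= M).
  { pose proof (qnorm_scale_ge0 _ (Cmod_ge_0 (/ a))). pose proof (qnorm_ge0 u HuX).
    unfold M. apply Rmult_le_pos; [apply Rmult_le_pos|]; lra. }
  set (delta := Rmin 1 (e / (2 * K))).
  set (eta := Rmin 1 (e / (2 * K * (M + 1)))).
  assert (Hdelta : 0 < delta) by (apply Rmin_case; [lra|apply Rdiv_lt_0_compat; lra]).
  assert (Hdelta_le : delta <= 1 /\ delta <= e / (2 * K)) by (split; [apply Rmin_l|apply Rmin_r]).
  assert (Heta : 0 < eta) by (apply Rmin_case; [lra|apply Rdiv_lt_0_compat; nra]).
  assert (Heta_le : eta <= 1 /\ eta <= e / (2 * K * (M + 1))) by (split; [apply Rmin_l|apply Rmin_r]).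
  exists (qinterior X (fun w => qnorm X (fun n => Cminus (Cmult a (w n)) (u n)) < delta)), eta.
  split; [apply openX_qinterior|].
  split; [eexists; apply qinterior_scaled_ball_inv; auto|].
  split; auto.
  intros w z HV Hzw. pose proof (proj1 HV) as Hw. apply qinterior_subset in HV.
  assert (HwM : qnorm X w <= M) by (apply qnorm_le_of_scaled_near; auto; lra).
  destruct (qnorm_relative_perturbation a u w z eta HuX Hw ltac:(lra) Hzw) as [Hz Hzu].
  apply Hball; auto. eapply Rle_lt_trans; [apply Hzu|].
  assert (eta * qnorm X w <= e / (2 * K)).
  { pose proof (qnorm_ge0 w Hw).
    apply Rle_trans with (e / (2 * K * (M + 1)) * (M + 1)); [|right; field; lra].
    apply Rmult_le_compat; lra. }
  apply Rlt_le_trans with (K * (e / (2 * K) + e / (2 * K))); [apply Rmult_lt_compat_l; lra|].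
  right; field; lra.
Qed.

End QuasiNorm.

(** * Lower density *)

Lemma count_upto_split A B C N : (forall n, A n -> B n \/ C n) ->
  count_upto A N <= count_upto B N + count_upto C N.
Proof.
  intros H. induction N; simpl;
    destruct (excluded_middle_informative (A _)) as [a|a];
    destruct (excluded_middle_informative (B _)) as [b|b];
    destruct (excluded_middle_informative (C _)) as [c|c];
    try (destruct (H _ a); tauto); lra.
Qed.

Lemma count_upto_lt n0 N : count_upto (fun n => (n < n0)%nat) N = INR (Nat.min (S N) n0).
Proof.
  induction N as [|N IHN]; simpl count_upto.
  - destruct n0; destruct (excluded_middle_informative _); simpl; try lia; lra.
  - rewrite IHN. destruct (excluded_middle_informative _).
    + replace (Nat.min (S (S N)) n0) with (S (Nat.min (S N) n0)) by lia. rewrite S_INR; lra.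
    + replace (Nat.min (S (S N)) n0) with (Nat.min (S N) n0) by lia. lra.
Qed.

Lemma count_upto_tail_le (A B : nat -> Prop) n0 N : (forall n, (n0 <= n)%nat -> B n -> A n) ->
  count_upto B N <= INR n0 + count_upto A N.
Proof.
  intros HBA. eapply Rle_trans.
  - apply (count_upto_split B (fun n => (n < n0)%nat) A).
    intros n Hn. destruct (Nat.lt_ge_cases n n0); auto.
  - rewrite count_upto_lt. apply Rplus_le_compat_r, le_INR. lia.
Qed.

Lemma lower_density_pos_eventually_ge A : Rbar_lt 0 (lower_density A) ->
  exists c, 0 < c /\ exists N1, forall N, (N1 <= N)%nat -> c <= count_upto A N / INR (S N).
Proof.
  unfold lower_density. destruct (ex_LimInf_seq (fun N => count_upto A N / INR (S N))) as [l Hl].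
  rewrite (is_LimInf_seq_unique _ _ Hl). destruct l as [l| |]; simpl in *; intros Hpos.
  - exists (l / 2); split; [lra|].
    destruct (Hl (mkposreal (l / 2) ltac:(lra))) as [_ [N1 HN1]].
    exists N1; intros N HN. specialize (HN1 N HN). simpl in HN1. lra.
  - exists 1; split; [lra|]. destruct (Hl 1) as [N1 HN1].
    exists N1; intros N HN; left; auto.
  - contradiction.
Qed.

(* Finitely many exceptional times cost only [n0 / (N + 1)] in the density quotient. *)
Lemma lower_density_pos_tail (A B : nat -> Prop) n0 : (forall n, (n0 <= n)%nat -> B n -> A n) ->
  Rbar_lt 0 (lower_density B) -> Rbar_lt 0 (lower_density A).
Proof.
  intros HBA HB.
  destruct (lower_density_pos_eventually_ge B HB) as [c [Hc [N1 HN1]]].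
  destruct (nfloor_ex (INR n0 * 2 / c)) as [N2 HN2].
  { apply Rmult_le_pos; [pose proof (pos_INR n0); lra|left; apply Rinv_0_lt_compat; lra]. }
  apply Rbar_lt_le_trans with (c / 2); [simpl; lra|].
  rewrite <- (LimInf_seq_const (c / 2)). apply LimInf_le.
  exists (max N1 N2). intros N HN.
  specialize (HN1 N ltac:(lia)).
  pose proof (count_upto_tail_le A B n0 N HBA) as Hcount.
  assert (Hs : INR n0 * 2 / c <= INR (S N)).
  { assert (INR (S N2) <= INR (S N)) by (apply le_INR; lia). rewrite S_INR in H. lra. }
  set (s := INR (S N)) in *.
  assert (Hs0 : 0 < s) by (apply lt_0_INR; lia).
  assert (HBc : c * s <= count_upto B N).
  { apply Rmult_le_reg_r with (/ s); [apply Rinv_0_lt_compat; lra|].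
    rewrite Rmult_assoc, Rinv_r; lra. }
  assert (Hn0 : INR n0 <= c / 2 * s).
  { assert (INR n0 * 2 / c * c = INR n0 * 2) by (field; lra). nra. }
  apply Rmult_le_reg_r with s; auto.
  replace (count_upto A N / s * s) with (count_upto A N) by (field; lra). nra.
Qed.

(** * Orbits of polynomials in x0 *)

Lemma lamB_iter lam (f : seqC) n k :
  Nat.iter n (lamB lam) f k = Cmult (pow_n lam n) (f (n + k)%nat).
Proof.
  revert k; induction n as [|n IHn]; intros k; simpl.
  - change (one : C) with (RtoC 1). ring.
  - unfold lamB at 1. rewrite IHn. replace (n + S k)%nat with (S (n + k)) by lia.
    change (mult lam (pow_n lam n)) with (Cmult lam (pow_n lam n)). ring.
Qed.

Lemma lamB_iter_relative_le lam (f g : seqC) (a : C) eta n : 0 <= eta ->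
  (forall j, (n <= j)%nat -> Cmod (Cminus (f j) (Cmult a (g j))) <= eta * Cmod (g j)) ->
  forall k, Cmod (Cminus (Nat.iter n (lamB lam) f k) (Cmult a (Nat.iter n (lamB lam) g k)))
            <= eta * Cmod (Nat.iter n (lamB lam) g k).
Proof.
  intros Heta Hfg k. rewrite !lamB_iter.
  replace (Cminus (Cmult (pow_n lam n) (f (n + k)%nat)) (Cmult a (Cmult (pow_n lam n) (g (n + k)%nat))))
    with (Cmult (pow_n lam n) (Cminus (f (n + k)%nat) (Cmult a (g (n + k)%nat))))
    by (unfold Cminus; ring).
  rewrite !Cmod_mult.
  pose proof (Hfg (n + k)%nat ltac:(lia)). pose proof (Cmod_ge_0 (pow_n lam n)). nra.
Qed.

Lemma Cmod_pow_n (x : C) k : Cmod (pow_n x k) = Cmod x ^ k.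
Proof.
  induction k as [|k IHk]; simpl.
  - apply Cmod_1.
  - change (mult x (pow_n x k)) with (Cmult x (pow_n x k)). rewrite Cmod_mult, IHk. ring.
Qed.

Definition poly_sum (alpha : nat -> C) (m N : nat) (x : C) : C :=
  sum_n_m (fun nu => Cmult (alpha nu) (pow_n x nu)) m N.

Lemma sum_n_m_le_loc (a b : nat -> R) n m : (forall k, (n <= k <= m)%nat -> a k <= b k) ->
  sum_n_m a n m <= sum_n_m b n m.
Proof.
  intros Hab. destruct (Nat.le_gt_cases n m) as [Hnm|Hmn].
  - induction Hnm as [|m Hnm IH].
    + rewrite !sum_n_n. apply Hab; lia.
    + rewrite !sum_n_Sm by lia. apply Rplus_le_compat; [apply IH; intros; apply Hab; lia|apply Hab; lia].
  - rewrite !sum_n_m_zero by auto. apply Rle_refl.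
Qed.

Lemma poly_sum_sub_lead_le alpha m N x r : (m <= N)%nat -> Cmod x <= r ->
  Cmod (Cminus (poly_sum alpha m N x) (Cmult (alpha m) (pow_n x m)))
  <= Cmod x ^ m * sum_n_m (fun nu => Cmod (alpha nu) * r ^ (nu - m)) (S m) N.
Proof.
  intros HmN Hx. unfold poly_sum. rewrite sum_Sn_m by auto.
  change (plus ?a ?b) with (Cplus a b).
  assert (Hcancel : forall a t : C, Cminus (Cplus a t) a = t) by (intros; unfold Cminus; ring).
  rewrite Hcancel.
  eapply Rle_trans; [apply (norm_sum_n_m (K := C_AbsRing) (V := C_NormedModule))|].
  rewrite <- (sum_n_m_mult_l (K := R_Ring)). apply sum_n_m_le_loc. intros nu Hnu.
  change (norm ?z) with (Cmod z). rewrite Cmod_mult, Cmod_pow_n.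
  replace (Cmod x ^ nu) with (Cmod x ^ m * Cmod x ^ (nu - m))
    by (rewrite <- pow_add; f_equal; lia).
  pose proof (Cmod_ge_0 x). pose proof (Cmod_ge_0 (alpha nu)).
  pose proof (pow_le (Cmod x) m ltac:(lra)).
  pose proof (pow_incr (Cmod x) r (nu - m) ltac:(lra)).
  change (mult ?a ?b) with (Rmult a b).
  replace (Cmod (alpha nu) * (Cmod x ^ m * Cmod x ^ (nu - m)))
    with (Cmod x ^ m * (Cmod (alpha nu) * Cmod x ^ (nu - m))) by ring.
  apply Rmult_le_compat_l; [lra|]. apply Rmult_le_compat_l; lra.
Qed.

Lemma sum_n_m_pow_shift_le f m N r : (forall nu, 0 <= f nu) -> 0 <= r <= 1 ->
  sum_n_m (fun nu => f nu * r ^ (nu - m)) (S m) N <= r * sum_n_m f (S m) N.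
Proof.
  intros Hf Hr. rewrite <- (sum_n_m_mult_l (K := R_Ring)). apply sum_n_m_le_loc. intros nu Hnu.
  change (mult ?a ?b) with (Rmult a b).
  replace (nu - m)%nat with (S (nu - S m)) by lia. simpl.
  pose proof (pow_incr r 1 (nu - S m) ltac:(lra)). rewrite pow1 in H.
  assert (0 <= r * f nu) by (apply Rmult_le_pos; [lra|apply Hf]).
  replace (f nu * (r * r ^ (nu - S m))) with (r * f nu * r ^ (nu - S m)) by ring.
  rewrite <- (Rmult_1_r (r * f nu)) at 2. apply Rmult_le_compat_l; lra.
Qed.

Lemma poly_sum_near_lead alpha m N eta : (m <= N)%nat -> 0 < eta ->
  exists r, 0 < r /\ forall x, Cmod x <= r ->
    Cmod (Cminus (poly_sum alpha m N x) (Cmult (alpha m) (pow_n x m))) <= eta * Cmod (pow_n x m).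
Proof.
  intros HmN Heta. set (A := sum_n_m (fun nu => Cmod (alpha nu)) (S m) N).
  assert (HA : 0 <= A).
  { replace 0 with (sum_n_m (G := R_AbelianMonoid) (fun _ => 0) (S m) N)
      by apply (sum_n_m_const_zero (G := R_AbelianMonoid)).
    apply sum_n_m_le. intros; apply Cmod_ge_0. }
  set (r := Rmin 1 (eta / (1 + A))).
  assert (Hr : 0 < r) by (apply Rmin_case; [lra|apply Rdiv_lt_0_compat; lra]).
  assert (Hr_le : r <= 1 /\ r <= eta / (1 + A)) by (split; [apply Rmin_l|apply Rmin_r]).
  exists r; split; auto.
  intros x Hx. rewrite Cmod_pow_n, (Rmult_comm eta).
  eapply Rle_trans; [apply (poly_sum_sub_lead_le alpha m N x r); auto|].
  apply Rmult_le_compat_l; [apply pow_le, Cmod_ge_0|].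
  eapply Rle_trans; [apply sum_n_m_pow_shift_le; [intros; apply Cmod_ge_0|lra]|]. fold A.
  apply Rle_trans with (eta / (1 + A) * A); [apply Rmult_le_compat_r; lra|].
  apply Rle_trans with (eta / (1 + A) * (1 + A)); [|right; field; lra].
  apply Rmult_le_compat_l; [left; apply Rdiv_lt_0_compat|]; lra.
Qed.

Lemma poly_sum_dominated alpha m N D : (m <= N)%nat -> 0 <= D ->
  exists c, 0 <= c /\ forall x, Cmod x <= D -> Cmod (poly_sum alpha m N x) <= c * Cmod (pow_n x m).
Proof.
  intros HmN HD. set (T := sum_n_m (fun nu => Cmod (alpha nu) * D ^ (nu - m)) (S m) N).
  assert (HT : 0 <= T).
  { replace 0 with (sum_n_m (G := R_AbelianMonoid) (fun _ => 0) (S m) N)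
      by apply (sum_n_m_const_zero (G := R_AbelianMonoid)).
    apply sum_n_m_le. intros. apply Rmult_le_pos; [apply Cmod_ge_0|apply pow_le; lra]. }
  exists (Cmod (alpha m) + T); split; [pose proof (Cmod_ge_0 (alpha m)); lra|].
  intros x Hx.
  replace (poly_sum alpha m N x) with
    (Cplus (Cminus (poly_sum alpha m N x) (Cmult (alpha m) (pow_n x m))) (Cmult (alpha m) (pow_n x m)))
    by (unfold Cminus; ring).
  eapply Rle_trans; [apply Cmod_triangle|].
  pose proof (poly_sum_sub_lead_le alpha m N x D HmN Hx) as Hsub. fold T in Hsub.
  rewrite Cmod_mult, Cmod_pow_n in *. lra.
Qed.

Theorem corollary2p3 (X : space)
  (HX : (exists p, X = Lp p /\ 1 <= p) \/ X = C0)
  (x0 : seqC) (Hx0 : inX X x0) (m : nat) (Hm : (1 <= m)%nat)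
  (lam : C) (Hlam : 1 < Cmod lam) :
  freq_hypercyclic X (lamB lam) (cpow x0 m) ->
  forall (N : nat) (alpha : nat -> C), (m <= N)%nat -> alpha m <> RtoC 0 ->
    freq_hypercyclic X (lamB lam)
      (fun n => sum_n_m (fun nu => Cmult (alpha nu) (cpow x0 nu n)) m N).
Proof.
  intros [Hxm Hxm_freq] N alpha HmN Hlead.
  change (freq_hypercyclic X (lamB lam) (fun n => poly_sum alpha m N (x0 n))).
  split.
  - destruct (inX_coord_bounded X HX x0 Hx0) as [D HD].
    destruct (poly_sum_dominated alpha m N D HmN (Rle_trans _ _ _ (Cmod_ge_0 _) (HD 0%nat)))
      as [c [Hc Hpoly]].
    apply (qnorm_dominated X HX _ (cpow x0 m) c Hxm Hc). intros k. apply Hpoly, HD.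
  - intros U HU [u Hu].
    destruct (open_relative_perturbation X HX U u (alpha m) HU Hu Hlead)
      as [V [eta [HV [HVne [Heta HVU]]]]].
    destruct (poly_sum_near_lead alpha m N eta HmN Heta) as [r [Hr Hnear]].
    destruct (inX_coord_small X HX x0 Hx0 r Hr) as [n0 Hn0].
    apply (lower_density_pos_tail _ _ n0) with (2 := Hxm_freq V HV HVne).
    intros n Hn HVn. apply (HVU _ _ HVn), lamB_iter_relative_le; [lra|]. intros j Hj.
    unfold cpow. apply Hnear, Rlt_le, Hn0. lia.
Qed.
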